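(* Let $(M,\varphi,\xi_\alpha,\eta^\alpha,g)$, $\alpha\in\{1,2\}$, be a Lorentz globally framed $f$-manifold with $\xi_1$ timelike, and fix $p\in M$. Let $F:(T_pM)^4\to\mathbb{R}$ be a curvature-like map such that for all $x,y,v\in\operatorname{Im}\varphi_p$ and all $\alpha,\beta,\gamma\in\{1,2\}$: $F(x,\xi_\alpha,y,v)=0$, $F(\xi_\alpha,x,\xi_\beta,y)=\varepsilon_\alpha\varepsilon_\beta\, g(x,y)$, $F(\xi_\alpha,x,\xi_\beta,\xi_\gamma)=0$, and $F(\xi_1,\xi_2,\xi_1,\xi_2)=0$. Then the following are equivalent: (a) $F(u,y,u,y)=0$ for every $u\in N_\varphi(\xi_1)$ and every $y\in u^\perp\cap\operatorname{Im}\varphi_p$ (i.e. $F$ vanishes on every degenerate plane $\mathrm{span}\{u,y\}$ of this type); (b) $F(x,y,v,z)=g(S_*(x,y)v,z)-g(S^*(x,y)v,z)$ for all $x,y,v,z\in T_pM$.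
   Context: A Lorentz globally framed $f$-manifold $(M,\varphi,\xi_\alpha,\eta^\alpha,g)$, $\alpha\in\{1,2\}$, is a manifold of dimension $2n+2$ with a $(1,1)$-tensor field $\varphi$ of constant rank $2n$, vector fields $\xi_1,\xi_2$ and $1$-forms $\eta^1,\eta^2$ with $\varphi^2=-I+\eta^1\otimes\xi_1+\eta^2\otimes\xi_2$, $\eta^\alpha(\xi_\beta)=\delta^\alpha_\beta$, and a Lorentz metric $g$ with $g(\varphi X,\varphi Y)=g(X,Y)-\sum_\alpha\varepsilon_\alpha\eta^\alpha(X)\eta^\alpha(Y)$, where $\varepsilon_\alpha=g(\xi_\alpha,\xi_\alpha)=\pm1$ (here $\varepsilon_1=-1$, $\varepsilon_2=1$). Put $\tilde\xi=\xi_1+\xi_2$ and $\tilde\eta=\sum_\alpha\varepsilon_\alpha\eta^\alpha$. A curvature-like map $F:V^4\to\mathbb{R}$ is a multilinear map with $F(y,x,z,w)=-F(x,y,z,w)$, $F(z,w,x,y)=F(x,y,z,w)$, and $F(x,y,z,w)+F(x,z,w,y)+F(x,w,y,z)=0$. $N_\varphi(\xi_1)=\{(\xi_1)_p+x: x\in\operatorname{Im}\varphi_p,\ g(x,x)=1\}$. The $(1,3)$-tensors $S^*,S_*$ are $S^*(x,y)v=\tilde\eta(y)\tilde\eta(v)x-\tilde\eta(x)\tilde\eta(v)y+g(y,v)\tilde\eta(x)\tilde\xi-g(x,v)\tilde\eta(y)\tilde\xi$, $S_*(x,y)v=-g(\varphi y,\varphi v)\varphi^2x+g(\varphi x,\varphi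 v)\varphi^2y$. *)

From HB Require Import structures.
From mathcomp Require Import all_boot all_order all_algebra.
From mathcomp Require Import reals.
Set Implicit Arguments. Unset Strict Implicit. Unset Printing Implicit Defensive.
Import Order.TTheory GRing.Theory Num.Theory.
Local Open Scope ring_scope.

(* Pointwise (tangent space T_pM) model.  T_pM is identified with row vectors
   'rV[R]_N, N = 2n+2.  Linear endomorphisms act on the right: phi_p x = x *m phi.
   The metric g_p is given by its Gram matrix G; the 1-forms eta^alpha_p by
   column vectors: eta^alpha(x) = (x *m eta alpha) 0 0.  alpha ranges over 'I_2
   (ord0 <-> alpha = 1, 1 <-> alpha = 2). *)

Section Defs.
Variable R : realType.
Variable N : nat.
Notation V := 'rV[R]_N.

Definition gform (G : 'M[R]_N) (x y : V) : R := (x *m G *m y^T) 0 0.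
Definition evf (e : 'cV[R]_N) (x : V) : R := (x *m e) 0 0.

Definition in_im (phi : 'M[R]_N) (x : V) : bool := (x <= phi)%MS.

Definition eps (G : 'M[R]_N) (xi : 'I_2 -> V) (a : 'I_2) : R := gform G (xi a) (xi a).

Definition xit (xi : 'I_2 -> V) : V := xi ord0 + xi 1.
Definition etat (G : 'M[R]_N) (xi : 'I_2 -> V) (eta : 'I_2 -> 'cV[R]_N) (x : V) : R :=
  \sum_(a < 2) eps G xi a * evf (eta a) x.

Definition multilinear4 (F : V -> V -> V -> V -> R) : Prop :=
  (forall (c : R) x x' y v w, F (c *: x + x') y v w = c * F x y v w + F x' y v w) /\
  (forall (c : R) x y y' v w, F x (c *: y + y') v w = c * F x y v w + F x y' v w) /\
  (forall (c : R) x y v v' w, F x y (c *: v + v') w = c * F x y v w + F x y v' w) /\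
  (forall (c : R) x y v w w', F x y v (c *: w + w') = c * F x y v w + F x y v w').

Definition curvature_like (F : V -> V -> V -> V -> R) : Prop :=
  multilinear4 F /\
  (forall x y z w, F y x z w = - F x y z w) /\
  (forall x y z w, F z w x y = F x y z w) /\
  (forall x y z w, F x y z w + F x z w y + F x w y z = 0).

Definition in_Nphi (G phi : 'M[R]_N) (xi : 'I_2 -> V) (u : V) : Prop :=
  exists x : V, in_im phi x /\ gform G x x = 1 /\ u = xi ord0 + x.

Definition Sup (G : 'M[R]_N) (xi : 'I_2 -> V) (eta : 'I_2 -> 'cV[R]_N) (x y v : V) : V :=
  let et := etat G xi eta in
  (et y * et v) *: x - (et x * et v) *: y
  + (gform G y v * et x) *: xit xi - (gform G x v * et y) *: xit xi.

Definition Slow (G phi : 'M[R]_N) (x y v : V) : V :=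
  - (gform G (y *m phi) (v *m phi)) *: (x *m phi *m phi)
  + (gform G (x *m phi) (v *m phi)) *: (y *m phi *m phi).

End Defs.

Definition lorentz_metric (R : realType) (m : nat) (G : 'M[R]_m.+1) : Prop :=
  G^T = G /\ exists P : 'M[R]_m.+1, P \in unitmx /\
     P *m G *m P^T = diag_mx (\row_(i < m.+1) (if i == ord0 then -1 else 1)).

Definition lorentz_gf (R : realType) (n : nat) (phi G : 'M[R]_(n.*2.+2))
    (xi : 'I_2 -> 'rV[R]_(n.*2.+2)) (eta : 'I_2 -> 'cV[R]_(n.*2.+2)) : Prop :=
  [/\ \rank phi = n.*2 /\
      phi *m phi = - 1%:M + \sum_(a < 2) (eta a *m xi a),
      (forall a b : 'I_2, evf (eta a) (xi b) = (a == b)%:R),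
      lorentz_metric G,
      (forall x y, gform G (x *m phi) (y *m phi)
                   = gform G x y - \sum_(a < 2) eps G xi a * evf (eta a) x * evf (eta a) y)
    & (eps G xi ord0 = -1 /\ eps G xi 1 = 1)].

From HB Require Import structures.
From mathcomp Require Import all_boot all_order all_algebra.
From mathcomp Require Import reals.
From mathcomp Require Import ring lra.
Set Implicit Arguments.
Unset Strict Implicit.
Unset Printing Implicit Defensive.
Import Order.TTheory GRing.Theory Num.Theory.
Local Open Scope ring_scope.

(* Let T(x,y,v,z) = g(S_*(x,y)v,z) - g(S^*(x,y)v,z).  T is curvature-like,
   satisfies the same normalisations on the frame as F, and vanishes on the
   degenerate planes span{xi_1 + x, y}; this gives (b) => (a).  Conversely,
   D = F - T is curvature-like and vanishes as soon as one argument is a xi,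
   so T_pM = Im phi (+) span{xi_1, xi_2} reduces D to its restriction to Im phi.
   Expanding D(xi_1 + x, y, xi_1 + x, y) = 0 gives D(x,y,x,y) = 0 for
   orthonormal x, y in Im phi.  As xi_1 is timelike and orthogonal to Im phi,
   g is positive definite there, so D has vanishing sectional curvature on
   Im phi and, by polarization and the Bianchi identity, D = 0. *)

Section LinearCombination.
Variables (R : pzRingType) (U : lmodType R) (f : U -> R).
Hypothesis f_comb : forall c x y, f (c *: x + y) = c * f x + f y.

Lemma comb0 : f 0 = 0.
Proof.
have := f_comb 1 0 0; rewrite scaler0 addr0 mul1r => f00.
by apply: (addrI (f 0)); rewrite addr0 -f00.
Qed.

Lemma combD x y : f (x + y) = f x + f y.
Proof. by rewrite -[x in LHS]scale1r f_comb mul1r. Qed.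

Lemma combZ c x : f (c *: x) = c * f x.
Proof. by rewrite -[_ *: x]addr0 f_comb comb0 addr0. Qed.

End LinearCombination.

Lemma sum_ord2 (U : nmodType) (f : 'I_2 -> U) : \sum_(a < 2) f a = f 0 + f 1.
Proof. by rewrite big_ord_recl big_ord1; congr (_ + f _); apply: val_inj. Qed.

Lemma ord2P (a : 'I_2) : a = 0 \/ a = 1.
Proof. by case: a => -[|[|//]] ?; [left | right]; apply: val_inj. Qed.

Section CurvatureLike.
Variables (R : realType) (N : nat).
Local Notation V := 'rV[R]_N.

Section Multilinear.
Variable D : V -> V -> V -> V -> R.
Hypothesis HD : multilinear4 D.

Lemma mlinD1 x x' y v w : D (x + x') y v w = D x y v w + D x' y v w.
Proof.
by case: HD => H _; apply: (combD (f := fun z => D z y v w)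
  (fun c x x' => H c x x' y v w)).
Qed.
Lemma mlinZ1 c x y v w : D (c *: x) y v w = c * D x y v w.
Proof.
by case: HD => H _; apply: (combZ (f := fun z => D z y v w)
  (fun c x x' => H c x x' y v w)).
Qed.
Lemma mlinD2 x y y' v w : D x (y + y') v w = D x y v w + D x y' v w.
Proof.
by case: HD => _ [H _]; apply: (combD (f := fun z => D x z v w)
  (fun c y y' => H c x y y' v w)).
Qed.
Lemma mlinZ2 c x y v w : D x (c *: y) v w = c * D x y v w.
Proof.
by case: HD => _ [H _]; apply: (combZ (f := fun z => D x z v w)
  (fun c y y' => H c x y y' v w)).
Qed.
Lemma mlinD3 x y v v' w : D x y (v + v') w = D x y v w + D x y v' w.
Proof.
by case: HD => _ [_ [H _]]; apply: (combD (f := fun z => D x y z w)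
  (fun c v v' => H c x y v v' w)).
Qed.
Lemma mlinZ3 c x y v w : D x y (c *: v) w = c * D x y v w.
Proof.
by case: HD => _ [_ [H _]]; apply: (combZ (f := fun z => D x y z w)
  (fun c v v' => H c x y v v' w)).
Qed.
Lemma mlinD4 x y v w w' : D x y v (w + w') = D x y v w + D x y v w'.
Proof.
by case: HD => _ [_ [_ H]]; apply: (combD (f := D x y v)
  (fun c w w' => H c x y v w w')).
Qed.
Lemma mlinZ4 c x y v w : D x y v (c *: w) = c * D x y v w.
Proof.
by case: HD => _ [_ [_ H]]; apply: (combZ (f := D x y v)
  (fun c w w' => H c x y v w w')).
Qed.

End Multilinear.

Section Symmetries.
Variable D : V -> V -> V -> V -> R.
Hypothesis HD : curvature_like D.

Lemma cl_multilinear : multilinear4 D. Proof. by case: HD. Qed.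
Lemma cl_antisym12 x y z w : D y x z w = - D x y z w. Proof. by case: HD => _ []. Qed.
Lemma cl_pair_sym x y z w : D z w x y = D x y z w. Proof. by case: HD => _ [_ []]. Qed.
Lemma cl_bianchi x y z w : D x y z w + D x z w y + D x w y z = 0.
Proof. by case: HD => _ [_ [_]]. Qed.

Lemma cl_antisym34 x y z w : D x y w z = - D x y z w.
Proof. by rewrite -cl_pair_sym cl_antisym12 cl_pair_sym. Qed.

Lemma cl_diag12 x z w : D x x z w = 0.
Proof. by have := cl_antisym12 x x z w; lra. Qed.

Lemma cl_diag34 x y z : D x y z z = 0.
Proof. by rewrite -cl_pair_sym cl_diag12. Qed.

End Symmetries.

Lemma curvature_likeB (D D' : V -> V -> V -> V -> R) :
  curvature_like D -> curvature_like D' -> curvature_like (fun x y v w => D x y v w - D' x y v w).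
Proof.
move=> HD HD'; have [M1 [M2 [M3 M4]]] := cl_multilinear HD.
have [M1' [M2' [M3' M4']]] := cl_multilinear HD'.
split; last split; last split.
- split; last split; last split; move=> *; rewrite ?M1 ?M1' ?M2 ?M2' ?M3 ?M3' ?M4 ?M4'; ring.
- by move=> x y z w; rewrite (cl_antisym12 HD x) (cl_antisym12 HD' x); ring.
- by move=> x y z w; rewrite (cl_pair_sym HD) (cl_pair_sym HD').
- move=> x y z w; have := cl_bianchi HD x y z w; have := cl_bianchi HD' x y z w; lra.
Qed.

Section Sectional.
Variables (W : pred V) (D : V -> V -> V -> V -> R).
Hypotheses (WD : forall x y, W x -> W y -> W (x + y)) (HD : curvature_like D).
Hypothesis sectional0 : forall x y, W x -> W y -> D x y x y = 0.

Let M := cl_multilinear HD.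

Lemma cl_sectional_polar x y v : W x -> W y -> W v -> D x y v y = 0.
Proof.
move=> Wx Wy Wv; have := sectional0 (WD Wx Wv) Wy.
rewrite !(mlinD1 M) !(mlinD3 M) !sectional0 // (cl_pair_sym HD v y x y); lra.
Qed.

Lemma cl_sectional_antisym x y v z : W x -> W y -> W v -> W z -> D x y v z = - D x z v y.
Proof.
move=> Wx Wy Wv Wz; have := cl_sectional_polar Wx (WD Wy Wz) Wv.
rewrite !(mlinD2 M) !(mlinD4 M) !cl_sectional_polar //; lra.
Qed.

Lemma cl_eq0_of_sectional x y v z : W x -> W y -> W v -> W z -> D x y v z = 0.
Proof.
move=> Wx Wy Wv Wz.
have e1 : D x v z y = D x y v z by rewrite cl_sectional_antisym // (cl_antisym34 HD x y z v).
have e2 : D x z y v = D x y v z.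
  by rewrite cl_sectional_antisym // -(cl_antisym34 HD x v y z) e1.
have := cl_bianchi HD x y v z; rewrite e1 e2; lra.
Qed.

End Sectional.

Section Orthonormal.
Variables (W : pred V) (B : V -> V -> R) (D : V -> V -> V -> V -> R).
Hypotheses (WD : forall x y, W x -> W y -> W (x + y)) (WZ : forall c x, W x -> W (c *: x)).
Hypotheses (B_combl : forall c x y z, B (c *: x + y) z = c * B x z + B y z)
           (B_combr : forall c x y z, B z (c *: x + y) = c * B z x + B z y).
Hypothesis B_pos : forall x, W x -> x != 0 -> 0 < B x x.
Hypothesis HD : curvature_like D.
Hypothesis orthonormal0 :
  forall x y, W x -> W y -> B x x = 1 -> B x y = 0 -> D x y x y = 0.

Let M := cl_multilinear HD.
Let BZl c x z : B (c *: x) z = c * B x z :=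
  combZ (f := B^~ z) (fun c x y => B_combl c x y z) c x.
Let BZr c x z : B z (c *: x) = c * B z x :=
  combZ (f := B z) (fun c x y => B_combr c x y z) c x.
Let BDr x y z : B z (x + y) = B z x + B z y :=
  combD (f := B z) (fun c x y => B_combr c x y z) x y.

Lemma cl_sectional_orthogonal x y : W x -> W y -> B x y = 0 -> D x y x y = 0.
Proof.
move=> Wx Wy Bxy; have [->|x0] := eqVneq x 0.
  by rewrite -(scale0r 0) (mlinZ1 M) mul0r.
set s := Num.sqrt (B x x); have Bx_gt0 := B_pos Wx x0.
have s_gt0 : 0 < s by rewrite sqrtr_gt0.
have ss : s ^+ 2 = B x x by rewrite sqr_sqrtr // ltW.
rewrite -[x](scalerKV (lt0r_neq0 s_gt0)) (mlinZ1 M) (mlinZ3 M) orthonormal0 ?mulr0 //.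
- by rewrite WZ.
- by rewrite BZl BZr mulrA -expr2 exprVn ss mulVf // lt0r_neq0.
- by rewrite BZl Bxy mulr0.
Qed.

Lemma cl_sectional_of_orthonormal x y : W x -> W y -> D x y x y = 0.
Proof.
move=> Wx Wy; have [->|x0] := eqVneq x 0.
  by rewrite -(scale0r 0) (mlinZ1 M) mul0r.
have Bx_neq0 : B x x != 0 by rewrite lt0r_neq0 // B_pos.
set k := B x y / B x x.
have Bxy' : B x (y + (- k) *: x) = 0 by rewrite BDr BZr /k; field.
have := cl_sectional_orthogonal Wx (WD Wy (WZ (- k) Wx)) Bxy'.
by rewrite !(mlinD2 M) !(mlinZ2 M) !(mlinD4 M) !(mlinZ4 M) cl_diag12 ?cl_diag34 //; lra.
Qed.

Lemma cl_eq0_of_orthonormal x y v z : W x -> W y -> W v -> W z -> D x y v z = 0.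
Proof. exact: (cl_eq0_of_sectional WD HD cl_sectional_of_orthonormal). Qed.

End Orthonormal.

End CurvatureLike.

Section BilinearForm.
Variables (R : realType) (N : nat) (G : 'M[R]_N).
Local Notation g := (gform G).

Lemma gform_combl c x y z : g (c *: x + y) z = c * g x z + g y z.
Proof. by rewrite /gform !mulmxDl -!scalemxAl !mxE. Qed.

Lemma gform_combr c x y z : g z (c *: x + y) = c * g z x + g z y.
Proof. by rewrite /gform linearD linearZ /= mulmxDr -scalemxAr !mxE. Qed.

Lemma gformDl x y z : g (x + y) z = g x z + g y z.
Proof. exact: (combD (f := g^~ z) (fun c x y => gform_combl c x y z)). Qed.
Lemma gformZl c x z : g (c *: x) z = c * g x z.
Proof. exact: (combZ (f := g^~ z) (fun c x y => gform_combl c x y z)). Qed.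
Lemma gformNl x z : g (- x) z = - g x z.
Proof. by rewrite -scaleN1r gformZl mulN1r. Qed.
Lemma gformDr x y z : g z (x + y) = g z x + g z y.
Proof. exact: (combD (f := g z) (fun c x y => gform_combr c x y z)). Qed.
Lemma gformZr c x z : g z (c *: x) = c * g z x.
Proof. exact: (combZ (f := g z) (fun c x y => gform_combr c x y z)). Qed.
Lemma gformNr x z : g z (- x) = - g z x.
Proof. by rewrite -scaleN1r gformZr mulN1r. Qed.
Lemma gform0l z : g 0 z = 0.
Proof. exact: (comb0 (f := g^~ z) (fun c x y => gform_combl c x y z)). Qed.
Lemma gform0r z : g z 0 = 0.
Proof. exact: (comb0 (f := g z) (fun c x y => gform_combr c x y z)). Qed.

Lemma gformC : G^T = G -> forall x y, g x y = g y x.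
Proof.
move=> GT x y; rewrite /gform -[in LHS](trmxK (x *m G *m y^T)) [in LHS]mxE.
by rewrite !trmx_mul trmxK GT mulmxA.
Qed.

Lemma evf_comb (e : 'cV[R]_N) c x y : evf e (c *: x + y) = c * evf e x + evf e y.
Proof. by rewrite /evf mulmxDl -scalemxAl !mxE. Qed.

End BilinearForm.

Section LorentzSignature.
Variables (R : realType) (m : nat) (G P : 'M[R]_m.+1).
Hypothesis G_sym : G^T = G.
Hypotheses (P_unit : P \in unitmx)
  (PGP : P *m G *m P^T = diag_mx (\row_(i < m.+1) (if i == ord0 then -1 else 1))).
Local Notation g := (gform G).

(* Coordinates in the g-orthonormal basis given by the rows of [P]. *)
Let coord (y : 'rV[R]_m.+1) : 'rV[R]_m.+1 := y *m invmx P.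
Let time y : R := coord y 0 0.
Let space2 y : R := \sum_(i < m) coord y 0 (lift ord0 i) ^+ 2.

Lemma gform_time_space y : g y y = - time y ^+ 2 + space2 y.
Proof.
have GE : G = invmx P *m diag_mx (\row_i (if i == ord0 then -1 else 1)) *m (invmx P)^T.
  by rewrite -PGP trmx_inv !mulmxA mulmxK ?unitmx_tr // mulVmx // mul1mx.
rewrite /gform GE !mulmxA -(mulmxA _ (invmx P)^T) -trmx_mul -/(coord y).
rewrite /time /space2; set u := coord y.
rewrite mul_mx_diag mxE big_ord_recl !mxE /=.
congr (_ + _); first by rewrite mulrN1 mulNr expr2.
by apply: eq_bigr => i _; rewrite !mxE eq_sym (negbTE (neq_lift ord0 i)) mulr1 expr2.
Qed.

Lemma time_comb c y y' : time (c *: y + y') = c * time y + time y'.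
Proof. by rewrite /time /coord mulmxDl -scalemxAl [X in X = _]mxE [X in X + _ = _]mxE. Qed.

Lemma space2_ge0 y : 0 <= space2 y.
Proof. by apply: sumr_ge0 => i _; apply: sqr_ge0. Qed.

Lemma time_space_eq0 y : time y = 0 -> space2 y = 0 -> y = 0.
Proof.
move=> t0 /eqP; rewrite psumr_eq0 => [/allP s0|i _]; last exact: sqr_ge0.
suff c0 : coord y = 0 by rewrite -(mulmxKV P_unit y) -/(coord y) c0 mul0mx.
apply/rowP => j; rewrite [RHS]mxE; case: (unliftP ord0 j) => [k ->|->]; last exact: t0.
by have := s0 k (mem_index_enum k); rewrite /= sqrf_eq0 => /eqP.
Qed.

Lemma spacelike_of_orthogonal_timelike t x :
  g t t < 0 -> g x t = 0 -> x != 0 -> 0 < g x x.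
Proof.
move=> tt_lt0 xt0 x0.
have tx0 : g t x = 0 by rewrite gformC.
set z := time t *: x - time x *: t.
have z_time : time z = 0.
  by rewrite /z -scaleNr time_comb (combZ time_comb); ring.
have zz : g z z = time t ^+ 2 * g x x + time x ^+ 2 * g t t.
  rewrite /z !(gformDl, gformDr, gformNl, gformNr, gformZl, gformZr) xt0 tx0; ring.
have zz_ge0 : 0 <= g z z by rewrite gform_time_space z_time expr0n oppr0 add0r space2_ge0.
have [x_time0|x_time_neq0] := eqVneq (time x) 0.
  rewrite gform_time_space x_time0 expr0n oppr0 add0r lt_def space2_ge0 andbT.
  by apply: contra_neq x0; apply: time_space_eq0.
have : 0 < time x ^+ 2 by rewrite lt_def sqrf_eq0 x_time_neq0 sqr_ge0.
nra.
Qed.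

End LorentzSignature.

Lemma lorentz_spacelike_of_orthogonal_timelike (R : realType) (m : nat) (G : 'M[R]_m.+1) t x :
  lorentz_metric G -> gform G t t < 0 -> gform G x t = 0 -> x != 0 -> 0 < gform G x x.
Proof.
by case=> G_sym [P [P_unit PGP]]; apply: (spacelike_of_orthogonal_timelike G_sym P_unit PGP).
Qed.

Lemma in_imD (R : realType) (N : nat) (phi : 'M[R]_N) x y :
  in_im phi x -> in_im phi y -> in_im phi (x + y).
Proof. exact: addmx_sub. Qed.

Lemma in_imZ (R : realType) (N : nat) (phi : 'M[R]_N) c x : in_im phi x -> in_im phi (c *: x).
Proof. exact: scalemx_sub. Qed.

Lemma mxrank_sum_outer2 (R : fieldType) (N : nat) (u : 'I_2 -> 'cV[R]_N) (v : 'I_2 -> 'rV[R]_N) :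
  (\rank (\sum_(a < 2) u a *m v a)%R <= 2)%N.
Proof.
rewrite sum_ord2 (leq_trans (mxrank_add _ _)) // -[2%N]/(1 + 1)%N.
by rewrite leq_add // (leq_trans (mxrankM_maxr _ _)) // rank_leq_row.
Qed.

Section Frame.
Variables (R : realType) (n : nat).
Local Notation N := n.*2.+2.
Local Notation V := 'rV[R]_N.
Variables (phi G : 'M[R]_N) (xi : 'I_2 -> V) (eta : 'I_2 -> 'cV[R]_N).
Hypothesis Hgf : lorentz_gf phi G xi eta.
Local Notation g := (gform G).
Local Notation et a := (evf (eta a)).
Local Notation t := (etat G xi eta).

Lemma frame_gformC x y : g x y = g y x.
Proof. by case: Hgf => _ _ [G_sym _] _ _; apply: gformC. Qed.

Lemma frame_eps0 : eps G xi 0 = -1. Proof. by case: Hgf => _ _ _ _ []. Qed.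
Lemma frame_eps1 : eps G xi 1 = 1. Proof. by case: Hgf => _ _ _ _ []. Qed.

Lemma eta_xi a b : et a (xi b) = (a == b)%:R.
Proof. by case: Hgf => _ ->. Qed.

Lemma phi_sqr x : x *m phi *m phi = - x + et 0 x *: xi 0 + et 1 x *: xi 1.
Proof.
case: Hgf => [[_ phi_sqrE]] _ _ _ _.
rewrite -mulmxA phi_sqrE mulmxDr mulmxN mulmx1 mulmx_sumr sum_ord2 addrA !mulmxA.
by rewrite [x *m eta 0]mx11_scalar [x *m eta 1]mx11_scalar !mul_scalar_mx.
Qed.

Lemma eta_phi_sqr a x : et a (x *m phi *m phi) = 0.
Proof.
rewrite phi_sqr !(combD (evf_comb _)) -scaleN1r !(combZ (evf_comb _)) !eta_xi.
by case: (ord2P a) => ->; rewrite /=; ring.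
Qed.

(* [phi^2 = -1 + (a matrix of rank <= 2)] forces [\rank (phi^2) >= 2n = \rank phi]. *)
Lemma phi_sub_phi_sqr : (phi <= phi *m phi)%MS.
Proof.
case: Hgf => [[rank_phi phi_sqrE]] _ _ _ _.
set E := \sum_(a < 2) _ in phi_sqrE.
have rank_phi_sqr : (n.*2 <= \rank (phi *m phi))%N.
  have idE : 1%:M = E - phi *m phi by rewrite phi_sqrE opprD opprK addrC subrK.
  have := mxrank_add E (- (phi *m phi)); rewrite -idE mxrank1 mxrank_opp => rank_sum.
  by rewrite -(leq_add2l 2) (leq_trans rank_sum) // leq_add2r mxrank_sum_outer2.
have /andP [] // : (phi *m phi == phi)%MS.
by rewrite -(geq_leqif (mxrank_leqif_eq (submxMl _ _))) rank_phi.
Qed.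

Lemma eta_im a x : in_im phi x -> et a x = 0.
Proof.
move=> /submx_trans/(_ phi_sub_phi_sqr)/submxP [y ->].
by rewrite mulmxA eta_phi_sqr.
Qed.

Lemma eta_phi a x : et a (x *m phi) = 0.
Proof. exact/eta_im/submxMl. Qed.

Lemma xi_phi a : xi a *m phi = 0.
Proof.
have xi_phi_sqr : xi a *m phi *m phi = 0.
  by rewrite phi_sqr !eta_xi; case: (ord2P a) => ->; rewrite /= ?scale1r ?scale0r addr0 addNr.
have := phi_sqr (xi a *m phi); rewrite !eta_phi !scale0r !addr0.
by rewrite xi_phi_sqr mul0mx => /esym /eqP; rewrite oppr_eq0 => /eqP.
Qed.

Lemma gform_xi x a : g x (xi a) = eps G xi a * et a x.
Proof.
case: Hgf => _ _ _ compat _; move: (compat x (xi a)).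
rewrite xi_phi gform0r sum_ord2 !eta_xi.
by case: (ord2P a) => ->; rewrite /= => /eqP; rewrite eq_sym subr_eq0 => /eqP ->; ring.
Qed.

Lemma gform_im_xi x a : in_im phi x -> g x (xi a) = 0.
Proof. by move=> x_im; rewrite gform_xi eta_im // mulr0. Qed.

Lemma gform_xi_im x a : in_im phi x -> g (xi a) x = 0.
Proof. by move=> x_im; rewrite frame_gformC gform_im_xi. Qed.

Lemma gform_xi_xi a b : g (xi a) (xi b) = eps G xi b * (b == a)%:R.
Proof. by rewrite gform_xi eta_xi. Qed.

Lemma im_phi_pos x : in_im phi x -> x != 0 -> 0 < g x x.
Proof.
case: Hgf => _ _ lorentz _ _ x_im x0.
apply: (lorentz_spacelike_of_orthogonal_timelike (t := xi 0)) => //.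
- by have := frame_eps0; rewrite /eps => ->; rewrite ltrN10.
- exact: gform_im_xi.
Qed.

Lemma etatE x : t x = - et 0 x + et 1 x.
Proof. by rewrite /etat sum_ord2 frame_eps0 frame_eps1 mulN1r mul1r. Qed.

Lemma etat_comb c x y : t (c *: x + y) = c * t x + t y.
Proof. by rewrite !etatE !evf_comb; ring. Qed.

Lemma etat_xi a : t (xi a) = eps G xi a.
Proof.
by rewrite etatE !eta_xi; case: (ord2P a) => ->; rewrite ?frame_eps0 ?frame_eps1 /=; ring.
Qed.

Lemma etat_im x : in_im phi x -> t x = 0.
Proof. by move=> x_im; rewrite etatE !eta_im // oppr0 add0r. Qed.

Lemma frame_decomp x : x = - (x *m phi *m phi) + et 0 x *: xi 0 + et 1 x *: xi 1.
Proof. by rewrite phi_sqr -[- x + _ + _]addrA opprD opprK -!addrA addNr addr0. Qed.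

Definition frame_gen x := in_im phi x \/ exists a, x = xi a.

Lemma frame_linear_eq0 (f : V -> R) : (forall c x y, f (c *: x + y) = c * f x + f y) ->
  (forall x, frame_gen x -> f x = 0) -> forall x, f x = 0.
Proof.
move=> f_comb f0 x; rewrite (frame_decomp x) !(combD f_comb) !(combZ f_comb).
rewrite !f0 ?mulr0 ?addr0 //; [by right; exists 1 | by right; exists 0 | left].
by rewrite /in_im -mulNmx submxMl.
Qed.

Lemma frame_multilinear_eq0 (D : V -> V -> V -> V -> R) : multilinear4 D ->
  (forall x y v z, frame_gen x -> frame_gen y -> frame_gen v -> frame_gen z -> D x y v z = 0) ->
  forall x y v z, D x y v z = 0.
Proof.
move=> [D1 [D2 [D3 D4]]] D0 x y v z.
move: x; apply: frame_linear_eq0 => [c x x'|x gx]; first exact: D1.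
move: y; apply: frame_linear_eq0 => [c y y'|y gy]; first exact: D2.
move: v; apply: frame_linear_eq0 => [c v v'|v gv]; first exact: D3.
move: z; apply: frame_linear_eq0 => [c z z'|z gz]; first exact: D4.
exact: D0.
Qed.

Section FrameVanishing.
Variable D : V -> V -> V -> V -> R.
Hypothesis HD : curvature_like D.
Hypotheses
  (D_im_xi_im_im : forall x y v a,
     in_im phi x -> in_im phi y -> in_im phi v -> D x (xi a) y v = 0)
  (D_xi_im_xi_im : forall x y a b, in_im phi x -> in_im phi y -> D (xi a) x (xi b) y = 0)
  (D_xi_im_xi_xi : forall x a b c, in_im phi x -> D (xi a) x (xi b) (xi c) = 0)
  (D_xi0_xi1 : D (xi 0) (xi 1) (xi 0) (xi 1) = 0)
  (D_im : forall x y v z,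
     in_im phi x -> in_im phi y -> in_im phi v -> in_im phi z -> D x y v z = 0).

Lemma cl_eq0_at_xi q r s a : frame_gen q -> frame_gen r -> frame_gen s -> D (xi a) q r s = 0.
Proof.
case=> [q_im|[b ->]]; case=> [r_im|[c ->]]; case=> [s_im|[d ->]].
- by rewrite (cl_antisym12 HD) D_im_xi_im_im ?oppr0.
- by rewrite (cl_antisym34 HD) D_xi_im_xi_im ?oppr0.
- exact: D_xi_im_xi_im.
- exact: D_xi_im_xi_xi.
- have := cl_bianchi HD (xi a) (xi b) r s.
  by rewrite (cl_antisym34 HD (xi a) r) !D_xi_im_xi_im // oppr0 !addr0.
- by rewrite (cl_antisym34 HD) -(cl_pair_sym HD) D_xi_im_xi_xi ?oppr0.
- by rewrite -(cl_pair_sym HD) D_xi_im_xi_xi.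
- case: (ord2P a) => ->; case: (ord2P b) => ->; rewrite ?(cl_diag12 HD) //;
  case: (ord2P c) => ->; case: (ord2P d) => ->; rewrite ?(cl_diag34 HD) //.
  + by rewrite (cl_antisym34 HD) D_xi0_xi1 oppr0.
  + by rewrite (cl_antisym12 HD) D_xi0_xi1 oppr0.
  + by rewrite (cl_antisym12 HD) (cl_antisym34 HD) D_xi0_xi1 !oppr0.
Qed.

Lemma cl_eq0_of_frame x y v z : D x y v z = 0.
Proof.
apply: frame_multilinear_eq0 (cl_multilinear HD) _ x y v z => x y v z.
case=> [x_im|[a ->]]; last exact: cl_eq0_at_xi.
case=> [y_im|[a ->]] => [|gv gz]; last by rewrite (cl_antisym12 HD) cl_eq0_at_xi ?oppr0 //; left.
case=> [v_im|[a ->]] => [|gz]; last by rewrite -(cl_pair_sym HD) cl_eq0_at_xi //; left.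
case=> [z_im|[a ->]]; first exact: D_im.
by rewrite (cl_antisym34 HD) -(cl_pair_sym HD) cl_eq0_at_xi ?oppr0 //; left.
Qed.

End FrameVanishing.

Definition phi_form x z := g (x *m phi) (z *m phi).

Lemma phi_formE x z : phi_form x z = g x z + et 0 x * et 0 z - et 1 x * et 1 z.
Proof.
by case: Hgf => _ _ _ compat _; rewrite /phi_form compat sum_ord2 frame_eps0 frame_eps1; ring.
Qed.

Lemma phi_form_combl c x y z : phi_form (c *: x + y) z = c * phi_form x z + phi_form y z.
Proof. by rewrite /phi_form mulmxDl -scalemxAl gform_combl. Qed.

Lemma phi_form_combr c x y z : phi_form z (c *: x + y) = c * phi_form z x + phi_form z y.
Proof. by rewrite /phi_form mulmxDl -scalemxAl gform_combr. Qed.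

Lemma phi_formC x z : phi_form x z = phi_form z x.
Proof. exact: frame_gformC. Qed.

Lemma phi_form_xil a z : phi_form (xi a) z = 0.
Proof. by rewrite /phi_form xi_phi gform0l. Qed.

Lemma phi_form_xir a z : phi_form z (xi a) = 0.
Proof. by rewrite phi_formC phi_form_xil. Qed.

Lemma phi_form_im x z : in_im phi x -> phi_form x z = g x z.
Proof. by move=> x_im; rewrite phi_formE !(eta_im _ x_im) !mul0r subr0 addr0. Qed.

Definition model x y v z :=
  phi_form x z * phi_form y v - phi_form x v * phi_form y z
  - (t y * t v * g x z - t x * t v * g y z + g y v * t x * t z - g x v * t y * t z).

Lemma modelE x y v z : g (Slow G phi x y v) z - g (Sup G xi eta x y v) z = model x y v z.
Proof.
have g_phi_sqr u w : g (u *m phi *m phi) w = - phi_form u w.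
  rewrite phi_sqr phi_formE !gformDl gformNl !gformZl !(frame_gformC (xi _)) !gform_xi.
  by rewrite frame_eps0 frame_eps1; ring.
have g_xit w : g (xit xi) w = t w.
  by rewrite /xit gformDl !(frame_gformC (xi _)) !gform_xi etatE frame_eps0 frame_eps1; ring.
rewrite /Slow /Sup /model /= !gformDl !gformNl !gformZl !g_phi_sqr g_xit -!/(phi_form _ _); ring.
Qed.

Definition model_combE := (phi_form_combl, phi_form_combr, gform_combl, gform_combr, etat_comb).

Lemma model_curvature_like : curvature_like model.
Proof.
split; last split; last split.
- by split; last split; last split; move=> *; rewrite /model !model_combE; ring.
- by move=> *; rewrite /model; ring.
- move=> x y z w; rewrite /model (phi_formC z y) (phi_formC w x) (phi_formC z x).
  by rewrite (phi_formC w y) !(frame_gformC z) !(frame_gformC w); ring.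
- move=> x y z w; rewrite /model.
  rewrite ?(phi_formC y x) ?(phi_formC z x) ?(phi_formC w x) ?(phi_formC z y).
  rewrite ?(phi_formC w y) ?(phi_formC w z) ?(frame_gformC y x) ?(frame_gformC z x).
  rewrite ?(frame_gformC w x) ?(frame_gformC z y) ?(frame_gformC w y) ?(frame_gformC w z).
  ring.
Qed.

Lemma model_im_xi_im_im x y v a :
  in_im phi x -> in_im phi y -> in_im phi v -> model x (xi a) y v = 0.
Proof.
move=> x_im y_im v_im; rewrite /model !phi_form_xil.
by rewrite (etat_im x_im) (etat_im y_im) (etat_im v_im); ring.
Qed.

Lemma model_xi_im_xi_im x y a b : in_im phi x -> in_im phi y ->
  model (xi a) x (xi b) y = eps G xi a * eps G xi b * g x y.
Proof.
move=> x_im y_im; rewrite /model !phi_form_xil !phi_form_xir !etat_xi.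
by rewrite !(etat_im x_im) !(etat_im y_im); ring.
Qed.

Lemma model_xi_im_xi_xi x a b c : in_im phi x -> model (xi a) x (xi b) (xi c) = 0.
Proof.
move=> x_im; rewrite /model !phi_form_xil !phi_form_xir !(etat_im x_im).
by rewrite !(gform_im_xi _ x_im); ring.
Qed.

Lemma model_xi0_xi1 : model (xi 0) (xi 1) (xi 0) (xi 1) = 0.
Proof. by rewrite /model !phi_form_xil !etat_xi !gform_xi_xi frame_eps0 frame_eps1 /=; ring. Qed.

Lemma model_degenerate_plane x y : in_im phi x -> in_im phi y ->
  g x x = 1 -> g x y = 0 -> model (xi 0 + x) y (xi 0 + x) y = 0.
Proof.
move=> x_im y_im xx1 xy0.
have phi_form_u z : phi_form (xi 0 + x) z = phi_form x z.
  by rewrite /phi_form mulmxDl xi_phi add0r.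
have t_u : t (xi 0 + x) = -1.
  by rewrite -[xi 0]scale1r etat_comb etat_xi (etat_im x_im) frame_eps0; ring.
rewrite /model !phi_form_u !(phi_formC _ (xi 0 + x)) !phi_form_u t_u (etat_im y_im).
rewrite !(phi_form_im _ x_im) !(phi_form_im _ y_im) !gformDl !gformDr (gform_xi_im 0 y_im).
rewrite (gform_xi_im 0 x_im) (gform_im_xi 0 x_im) gform_xi_xi frame_eps0 /=.
by rewrite (frame_gformC y x) xy0 xx1; ring.
Qed.

Section Characterization.
Variable F : V -> V -> V -> V -> R.
Hypothesis HF : curvature_like F.
Hypotheses
  (F_im_xi_im_im : forall x y v, in_im phi x -> in_im phi y -> in_im phi v ->
     forall a, F x (xi a) y v = 0)
  (F_xi_im_xi_im : forall x y, in_im phi x -> in_im phi y ->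
     forall a b, F (xi a) x (xi b) y = eps G xi a * eps G xi b * g x y)
  (F_xi_im_xi_xi : forall x, in_im phi x -> forall a b c, F (xi a) x (xi b) (xi c) = 0)
  (F_xi0_xi1 : F (xi 0) (xi 1) (xi 0) (xi 1) = 0).

Definition degenerate_planes_flat :=
  forall u y, in_Nphi G phi xi u -> g u y = 0 -> in_im phi y -> F u y u y = 0.

Definition curvature_is_model :=
  forall x y v z, F x y v z = g (Slow G phi x y v) z - g (Sup G xi eta x y v) z.

Lemma degenerate_planes_flat_of_model : curvature_is_model -> degenerate_planes_flat.
Proof.
move=> F_model u y [x [x_im [xx1 ->]]] uy0 y_im.
rewrite F_model modelE model_degenerate_plane //.
by rewrite -uy0 gformDl gform_xi_im // add0r.
Qed.

Lemma model_of_degenerate_planes_flat : degenerate_planes_flat -> curvature_is_model.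
Proof.
move=> flat; pose D x y v z := F x y v z - model x y v z.
suff D0 : forall x y v z, D x y v z = 0.
  by move=> x y v z; rewrite modelE; apply/eqP; rewrite -subr_eq0; apply/eqP; apply: D0.
have HD : curvature_like D := curvature_likeB HF model_curvature_like.
have D_xi_im_xi_im x y a b : in_im phi x -> in_im phi y -> D (xi a) x (xi b) y = 0.
  by move=> x_im y_im; rewrite /D F_xi_im_xi_im // model_xi_im_xi_im // subrr.
have D_im_xi_im_im x y v a :
    in_im phi x -> in_im phi y -> in_im phi v -> D x (xi a) y v = 0.
  by move=> x_im y_im v_im; rewrite /D F_im_xi_im_im // model_im_xi_im_im // subrr.
have D_orthonormal x y :
    in_im phi x -> in_im phi y -> g x x = 1 -> g x y = 0 -> D x y x y = 0.
  (* The cross terms vanish by the frame conditions on D. *)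
  move=> x_im y_im xx1 xy0; have M := cl_multilinear HD.
  have : D (xi 0 + x) y (xi 0 + x) y = 0.
    rewrite /D model_degenerate_plane // flat ?subrr //; first by exists x.
    by rewrite gformDl gform_xi_im // add0r.
  rewrite !(mlinD1 M) !(mlinD3 M) D_xi_im_xi_im // -(cl_pair_sym HD x y).
  by rewrite (cl_antisym12 HD y (xi 0)) D_im_xi_im_im //; lra.
apply: (cl_eq0_of_frame HD D_im_xi_im_im D_xi_im_xi_im) => [x a b c x_im||].
- by rewrite /D F_xi_im_xi_xi // model_xi_im_xi_xi // subrr.
- by rewrite /D F_xi0_xi1 model_xi0_xi1 subrr.
- exact: (cl_eq0_of_orthonormal (@in_imD _ _ phi) (@in_imZ _ _ phi) (@gform_combl _ _ G)
    (@gform_combr _ _ G) im_phi_pos HD D_orthonormal).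
Qed.

End Characterization.

End Frame.

Theorem lemma5p6 (R : realType) (n : nat) (n_gt0 : (0 < n)%N)
    (phi G : 'M[R]_(n.*2.+2))
    (xi : 'I_2 -> 'rV[R]_(n.*2.+2)) (eta : 'I_2 -> 'cV[R]_(n.*2.+2))
    (F : 'rV[R]_(n.*2.+2) -> 'rV[R]_(n.*2.+2) -> 'rV[R]_(n.*2.+2) -> 'rV[R]_(n.*2.+2) -> R) :
  lorentz_gf phi G xi eta ->
  curvature_like F ->
  (forall x y v, in_im phi x -> in_im phi y -> in_im phi v ->
     forall a : 'I_2, F x (xi a) y v = 0) ->
  (forall x y, in_im phi x -> in_im phi y ->
     forall a b : 'I_2, F (xi a) x (xi b) y = eps G xi a * eps G xi b * gform G x y) ->
  (forall x, in_im phi x ->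
     forall a b c : 'I_2, F (xi a) x (xi b) (xi c) = 0) ->
  F (xi ord0) (xi 1) (xi ord0) (xi 1) = 0 ->
  ((forall u y, in_Nphi G phi xi u -> gform G u y = 0 -> in_im phi y -> F u y u y = 0)
   <->
   (forall x y v z, F x y v z = gform G (Slow G phi x y v) z - gform G (Sup G xi eta x y v) z)).
Proof.
move=> Hgf HF F_im_xi_im_im F_xi_im_xi_im F_xi_im_xi_xi F_xi0_xi1; split.
- exact: (model_of_degenerate_planes_flat Hgf HF
    F_im_xi_im_im F_xi_im_xi_im F_xi_im_xi_xi F_xi0_xi1).
- exact: (degenerate_planes_flat_of_model Hgf).
Qed.
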